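(* Let $v\in\Sigma^*$, let $u$ be a $v$-minimal word, let $i\in\mathrm{supp}(u)$ and $g\in\mathcal{I}_i$. If a word $w$ $u$-represents $g$, then either $g=\theta_i(w)=0_i$ or $\mathrm{supp}(w)=\mathrm{supp}(u)$.
   Context: Let $\mathcal{A}=\langle Q,\Sigma,\delta\rangle$ be a synchronizing automaton with $n$ states $q_1,\dots,q_n$; write $q\cdot u$ for the action of $u\in\Sigma^*$ and $\mathrm{rk}(u)=|Q\cdot u|$. Each word acts linearly on $\mathbb{C}Q$ by $q\mapsto q\cdot u$, preserving $w^\perp=\{x:\langle x,q_1+\dots+q_n\rangle=0\}$; let $\rho:\Sigma^*\to\mathbb{M}_{n-1}(\mathbb{C})$ be the induced representation, $\mathcal{R}$ the $\mathbb{C}$-algebra generated by $\rho(\Sigma^* )$, $\mathrm{Rad}(\mathcal{A})=\rho^{-1}(\mathrm{Rad}(\mathcal{R}))$. Write $\mathcal{R}/\mathrm{Rad}(\mathcal{R})\cong\prod_{i=1}^k\mathbb{M}_{n_i}(\mathbb{C})$ and let $\theta_i:\Sigma^*\to\mathbb{M}_{n_i}(\mathbb{C})$ be $\rho$ followed by the quotient map and the $i$-th projection; $0_i$ is the zero matrix. The monoid $\theta_i(\Sigma^* )$ has a unique $0$-minimal ideal $\mathcal{I}_i$ (which contains $0_i$). The support of a word $z$ is $\mathrm{supp}(z)=\{i:\theta_i(z)\neq0_i\}$. For $v\in\Sigma^*$, a word $u\in\Sigma^*v\Sigma^*$ is $v$-minimal if $\mathrm{supp}(u)\neq\emptyset$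 and there is no $z\in\Sigma^*v\Sigma^*$ with $\emptyset\neq\mathrm{supp}(z)\subsetneq\mathrm{supp}(u)$. For such $u$, $i\in\mathrm{supp}(u)$ and $g\in\mathcal{I}_i$, a word $w$ $u$-represents $g$ if $w\in\Sigma^*u\Sigma^*$, $\theta_i(w)=g$, and either $g=0_i$ or $\mathrm{rk}(w)$ is minimum among all words $w'\in\Sigma^*u\Sigma^*$ with $\theta_i(w')=g$. *)

From HB Require Import structures.
From mathcomp Require Import all_boot all_algebra.
From mathcomp Require Import Rstruct complex.
Set Implicit Arguments.
Unset Strict Implicit.
Unset Printing Implicit Defensive.
Import GRing.Theory.
Local Open Scope ring_scope.

Definition CC : numClosedFieldType := (Rdefinitions.R)[i].

Section Automaton.
(* A (complete, deterministic) automaton with alphabet Sigma and state set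
   Q = 'I_n.+1 (so the paper's n is our n.+1, and w^perp has dimension n). *)
Variables (Sigma : finType) (n : nat) (delta : 'I_n.+1 -> Sigma -> 'I_n.+1).

Definition act (q : 'I_n.+1) (u : seq Sigma) : 'I_n.+1 := foldl delta q u.

Definition image_set (u : seq Sigma) : {set 'I_n.+1} := [set act q u | q in 'I_n.+1].
Definition rk (u : seq Sigma) : nat := #|image_set u|.

Definition synchronizing : Prop := exists u : seq Sigma, rk u = 1%N.

(* The induced representation rho on w^perp = { x | sum_q x_q = 0 }, written in
   the basis b_j = q_j - q_n (j < n) of w^perp (row-vector convention:
   b_j . u = q_{j.u} - q_{n.u} = sum_k ([j.u = k] - [n.u = k]) b_k ). *)
Definition rho (u : seq Sigma) : 'M[CC]_n :=
  \matrix_(j < n, k < n)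
     ((act (widen_ord (leqnSn n) j) u == widen_ord (leqnSn n) k)%:R
      - (act ord_max u == widen_ord (leqnSn n) k)%:R).

Inductive gen_alg (S : 'M[CC]_n -> Prop) : 'M[CC]_n -> Prop :=
  | ga_gen x : S x -> gen_alg S x
  | ga_one : gen_alg S 1%:M
  | ga_zero : gen_alg S 0
  | ga_add x y : gen_alg S x -> gen_alg S y -> gen_alg S (x + y)
  | ga_scale (c : CC) x : gen_alg S x -> gen_alg S (c *: x)
  | ga_mul x y : gen_alg S x -> gen_alg S y -> gen_alg S (x *m y).

Definition Ralg : 'M[CC]_n -> Prop := gen_alg (fun x => exists u, x = rho u).

Definition alg_ideal (I : 'M[CC]_n -> Prop) : Prop :=
  (forall x, I x -> Ralg x) /\ I 0 /\
  (forall x y, I x -> I y -> I (x + y)) /\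
  (forall (c : CC) x, I x -> I (c *: x)) /\
  (forall x y, Ralg x -> I y -> I (x *m y) /\ I (y *m x)).

Definition nilpotent_ideal (I : 'M[CC]_n -> Prop) : Prop :=
  exists m : nat, forall s : seq 'M[CC]_n, size s = m -> (forall x, x \in s -> I x) ->
    foldr (fun a b => a *m b) 1%:M s = 0.

(* Rad(R): the (Jacobson = Wedderburn) radical of the finite-dimensional algebra
   R, i.e. its largest nilpotent two-sided ideal = union of all nilpotent ideals. *)
Definition Rad (x : 'M[CC]_n) : Prop :=
  exists I, alg_ideal I /\ nilpotent_ideal I /\ I x.

Section Wedderburn.
(* theta_i = pi_i o (R -> R/Rad R ~= prod_{i<k} M_{ns i}(C)) o rho.
   phi i is the i-th component of an algebra morphism R -> prod_i M_{ns i}(C)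
   which is surjective with kernel Rad(R) (values outside R are irrelevant). *)
Variables (k : nat) (ns : 'I_k -> nat) (phi : forall i : 'I_k, 'M[CC]_n -> 'M[CC]_(ns i)).

Definition wedderburn_decomposition : Prop :=
  (forall i, 0 < ns i)%N /\
  (forall i, phi i 1%:M = 1%:M) /\
  (forall i x y, Ralg x -> Ralg y -> phi i (x + y) = phi i x + phi i y) /\
  (forall i (c : CC) x, Ralg x -> phi i (c *: x) = c *: phi i x) /\
  (forall i x y, Ralg x -> Ralg y -> phi i (x *m y) = phi i x *m phi i y) /\
  (forall g : forall i, 'M[CC]_(ns i), exists x, Ralg x /\ forall i, phi i x = g i) /\
  (forall x, Ralg x -> ((forall i, phi i x = 0) <-> Rad x)).

Definition theta (i : 'I_k) (u : seq Sigma) : 'M[CC]_(ns i) := phi i (rho u).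

Definition supp (z : seq Sigma) : {set 'I_k} := [set i | theta i z != 0].

Definition v_minimal (v u : seq Sigma) : Prop :=
  infix v u /\ supp u != set0 /\
  ~ (exists z, infix v z /\ supp z != set0 /\ supp z \proper supp u).

Definition theta_monoid (i : 'I_k) (g : 'M[CC]_(ns i)) : Prop := exists u, g = theta i u.

Definition monoid_ideal (m : nat) (M I : 'M[CC]_m -> Prop) : Prop :=
  [/\ (forall a, I a -> M a), (exists a, I a) &
      (forall x a y, M x -> I a -> M y -> I (x *m a *m y))].

Definition zero_minimal_ideal (m : nat) (M I : 'M[CC]_m -> Prop) : Prop :=
  [/\ monoid_ideal M I, I 0, (exists a, I a /\ a <> 0) &
      (forall J, monoid_ideal M J -> (forall a, J a -> I a) ->
          (forall a, J a <-> a = 0) \/ (forall a, J a <-> I a))].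

Definition u_represents (u : seq Sigma) (i : 'I_k) (g : 'M[CC]_(ns i)) (w : seq Sigma) : Prop :=
  [/\ infix u w, theta i w = g &
      (g = 0 \/ forall w', infix u w' -> theta i w' = g -> (rk w <= rk w')%N)].
End Wedderburn.
End Automaton.

Arguments theta_monoid {Sigma n} delta {k ns} phi i g.
Arguments u_represents {Sigma n} delta {k ns} phi u i g w.

(* Since theta_i is multiplicative, the support can only shrink when a word is
   extended on either side, so supp w is contained in supp u for any factor u
   of w.  By v-minimality of u the inclusion cannot be proper unless supp w is
   empty, and an empty support forces g = theta_i(w) = 0. *)
From HB Require Import structures.
From mathcomp Require Import all_boot all_algebra.
From mathcomp Require Import Rstruct complex.
Set Implicit Arguments.
Unset Strict Implicit.
Unset Printing Implicit Defensive.
Import GRing.Theory.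
Local Open Scope ring_scope.

Section Representation.
Variables (Sigma : finType) (n : nat) (delta : 'I_n.+1 -> Sigma -> 'I_n.+1).

Lemma act_cat (q : 'I_n.+1) (s t : seq Sigma) :
  act delta q (s ++ t) = act delta (act delta q s) t.
Proof. exact: foldl_cat. Qed.

Lemma rho_cat (s t : seq Sigma) : rho delta (s ++ t) = rho delta s *m rho delta t.
Proof.
apply/matrixP => j l; rewrite !mxE.
set f : 'I_n.+1 -> CC := fun q =>
  (act delta q t == widen_ord (leqnSn n) l)%:R
  - (act delta ord_max t == widen_ord (leqnSn n) l)%:R.
set A : 'I_n.+1 -> CC := fun q =>
  (act delta (widen_ord (leqnSn n) j) s == q)%:R - (act delta ord_max s == q)%:R.
(* The basis vector b_n = q_n - q_n vanishes, so the sum may run over all of Q. *)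
have -> : \sum_(k < n) rho delta s j k * rho delta t k l = \sum_(q < n.+1) A q * f q.
  rewrite big_ord_recr /= {2}/f subrr mulr0 addr0.
  by apply: eq_bigr => k _; rewrite !mxE.
have sum_delta (a : 'I_n.+1) : \sum_(q < n.+1) (a == q)%:R * f q = f a.
  rewrite (bigD1 a) //= eqxx mul1r big1 ?addr0 // => q /negbTE.
  by rewrite eq_sym => ->; rewrite mul0r.
under eq_bigr => q _ do rewrite mulrBl.
by rewrite sumrB !sum_delta /f !act_cat opprB addrA subrK.
Qed.

Lemma Ralg_rho (u : seq Sigma) : Ralg delta (rho delta u).
Proof. by apply: ga_gen; exists u. Qed.

Section Support.
Variables (k : nat) (ns : 'I_k -> nat).
Variable phi : forall i : 'I_k, 'M[CC]_n -> 'M[CC]_(ns i).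
Hypothesis phiM : forall i x y, Ralg delta x -> Ralg delta y ->
  phi i (x *m y) = phi i x *m phi i y.

Lemma theta_cat (i : 'I_k) (s t : seq Sigma) :
  theta delta phi i (s ++ t) = theta delta phi i s *m theta delta phi i t.
Proof. by rewrite /theta rho_cat phiM //; apply: Ralg_rho. Qed.

Lemma supp_infix (u w : seq Sigma) :
  infix u w -> supp delta phi w \subset supp delta phi u.
Proof.
case/infixP=> x [y ->]; apply/subsetP => i; rewrite !inE.
apply: contraNN => /eqP theta_u0.
by rewrite !theta_cat theta_u0 mul0mx mulmx0.
Qed.

Lemma supp_infix_v_minimal (v u w : seq Sigma) :
  v_minimal delta phi v u -> infix u w ->
  supp delta phi w = set0 \/ supp delta phi w = supp delta phi u.
Proof.
move=> [vu [_ u_min]] uw.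
have [->|supp_w_ne0] := eqVneq (supp delta phi w) set0; first by left.
right; apply/eqP; rewrite eqEproper supp_infix //=.
apply/negP => supp_w_proper; apply: u_min.
by exists w; split=> //; apply: infix_trans vu uw.
Qed.

Lemma theta_supp0 (i : 'I_k) (w : seq Sigma) :
  supp delta phi w = set0 -> theta delta phi i w = 0.
Proof.
move=> supp_w0; apply/eqP; apply: contraT => theta_w_ne0.
by rewrite -(in_set0 i) -supp_w0 inE.
Qed.

End Support.
End Representation.

Theorem mainTheorem4 (Sigma : finType) (n : nat) (delta : 'I_n.+1 -> Sigma -> 'I_n.+1)
  (k : nat) (ns : 'I_k -> nat) (phi : forall i : 'I_k, 'M[CC]_n -> 'M[CC]_(ns i))
  (Isets : forall i : 'I_k, 'M[CC]_(ns i) -> Prop) :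
  synchronizing delta ->
  wedderburn_decomposition delta phi ->
  (forall i, zero_minimal_ideal (theta_monoid delta phi i) (Isets i)) ->
  forall (v u : seq Sigma) (i : 'I_k) (g : 'M[CC]_(ns i)) (w : seq Sigma),
    v_minimal delta phi v u ->
    i \in supp delta phi u ->
    Isets i g ->
    u_represents delta phi u i g w ->
    (g = 0 /\ theta delta phi i w = 0) \/ supp delta phi w = supp delta phi u.
Proof.
move=> _ [_ [_ [_ [_ [phiM _]]]]] _ v u i g w u_min _ _ [uw theta_w _].
have [supp_w0|] := supp_infix_v_minimal phiM u_min uw; last by right.
by left; rewrite -theta_w theta_supp0.
Qed.
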